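(* Consider a physically realizable annihilation operator plant \[ da = F a\,dt + G_w\, d\mathcal{W} + G_u\, d\mathcal{U},\qquad d\mathcal{Y} = H a\,dt + K\, d\mathcal{W}, \] with augmented (unused) output $d\mathcal{\tilde Y} = \tilde H a\,dt + \tilde K d\mathcal{W} + \bar K d\mathcal{U}$, and a physical cost output \[ d\mathcal{Z} = L\begin{bmatrix} d\mathcal{Y}\\ d\mathcal{\tilde Y}\end{bmatrix}, \] where $L$ is a matrix whose columns are standard unit vectors (so that $L^\dagger L = I$). Then the trivial controller $d\mathcal{U} = d\mathcal{\tilde W}$ is always an optimal solution to the corresponding coherent $H^\infty$ quantum optimal control problem.
   Context: $a$ is a vector of annihilation operators with $[a,a^\dagger]=\Theta$, $\Theta>0$; $\mathcal{W}$, $\mathcal{U}$, $\mathcal{\tilde W}$, $\mathcal{Y}$, $\mathcal{\tilde Y}$ are vectors of bosonic field operators. A system $da = F a\,dt + G\,d\mathcal{A}$, $d\mathcal{A}^{out} = H a\,dt + K\,d\mathcal{A}$ is physically realizable iff there is a complex matrix $\Theta>0$ with $F\Theta+\Theta F^\dagger + GG^\dagger = 0$, $G=-\Theta H^\dagger$, $K=I$. The plant is physically realizable if the system with input $(\mathcal{W},\mathcal{U})$ and output $(\mathcal{Y},\mathcal{\tilde Y})$ is physically realizable (in particular its feedthrough $\begin{bmatrix}K&0\\ \tilde K&\bar K\end{bmatrix}$ is the identity). A coherent controller is a quantum linear system $da_c = F_c a_c\,dt + G_{cw}\,d\mathcal{\tilde W} + G_{cy}\,d\mathcal{Y}$, $d\mathcal{U}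 = H_c a_c\,dt + K_{cw}\,d\mathcal{\tilde W} + K_{cy}\,d\mathcal{Y}$, with controller quantum noise input $\mathcal{\tilde W}$ (of the same dimension as $\mathcal{U}$ for the trivial controller $d\mathcal{U}=d\mathcal{\tilde W}$ to make sense); it is physically realizable if it can be augmented by an additional (unused) output $d\mathcal{\tilde U}$ so that the system from $(\mathcal{\tilde W},\mathcal{Y})$ to $(\mathcal{U},\mathcal{\tilde U})$ is physically realizable. The coherent $H^\infty$ problem is to minimize the $H^\infty$ norm $\|\Gamma_{cl}\|_\infty$ of the closed-loop transfer function from all noise inputs $(\mathcal{W},\mathcal{\tilde W})$ (including the controller noises) to $\mathcal{Z}$, over all physically realizable controllers for which the closed-loop system is internally stable. *)

From HB Require Import structures.
From mathcomp Require Import all_boot all_order all_algebra.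
From mathcomp Require Import complex.
From mathcomp Require Import boolp classical_sets reals constructive_ereal ereal.
Set Implicit Arguments. Unset Strict Implicit. Unset Printing Implicit Defensive.
Import Order.TTheory GRing.Theory Num.Theory.
Local Open Scope ring_scope.

Section Defs.
Variable R : realType.
Local Notation C := (R[i]).

Definition adj (m n : nat) (A : 'M[C]_(m, n)) : 'M[C]_(n, m) := (map_mx conjc A)^T.

Definition posdef (n : nat) (T : 'M[C]_n) : Prop :=
  adj T = T /\ forall v : 'cV[C]_n, v != 0 -> 0 < (adj v *m T *m v) 0 0.

(* Physical realizability of  da = F a dt + G dA,  dA_out = H a dt + K dA
   (m-dimensional input and output fields):
   exists Theta > 0 with F Theta + Theta F^dag + G G^dag = 0, G = - Theta H^dag, K = I. *)
Definition phys_realizable_sq (n m : nat) (F : 'M[C]_n) (G : 'M[C]_(n, m))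
  (H : 'M[C]_(m, n)) (K : 'M[C]_m) : Prop :=
  exists Theta : 'M[C]_n, [/\ posdef Theta,
    F *m Theta + Theta *m adj F + G *m adj G = 0,
    G = - (Theta *m adj H) &
    K = 1%:M].

(* general dimensions: K = I forces the output dimension p to equal the input
   dimension m; the matrices are then read as square ones. *)
Definition phys_realizable (n m p : nat) (F : 'M[C]_n) (G : 'M[C]_(n, m))
  (H : 'M[C]_(p, n)) (K : 'M[C]_(p, m)) : Prop :=
  exists e : p = m,
    phys_realizable_sq F G (castmx (e, erefl n) H) (castmx (e, erefl m) K).

Definition vnorm (k : nat) (v : 'cV[C]_k) : R :=
  Num.sqrt (\sum_i ((complex.Re (v i 0)) ^+ 2 + (complex.Im (v i 0)) ^+ 2)).

Definition tf (k m p : nat) (A : 'M[C]_k) (B : 'M[C]_(k, m)) (Cm : 'M[C]_(p, k))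
  (D : 'M[C]_(p, m)) (s : C) : 'M[C]_(p, m) :=
  Cm *m invmx (s%:M - A) *m B + D.

(* H-infinity norm: sup over real frequencies w of the largest singular
   value of the transfer function at s = i w (induced 2-norm). *)
Definition hinf_norm (k m p : nat) (A : 'M[C]_k) (B : 'M[C]_(k, m))
  (Cm : 'M[C]_(p, k)) (D : 'M[C]_(p, m)) : \bar R :=
  ereal_sup [set r : \bar R | exists (w : R) (v : 'cV[C]_m),
      vnorm v = 1 /\ r = (vnorm (tf A B Cm D (Complex 0 w) *m v))%:E]%classic.

Definition hurwitz (k : nat) (A : 'M[C]_k) : Prop :=
  forall lambda : C, eigenvalue A lambda -> complex.Re lambda < 0.

(* Plant
     da  = F a dt + Gw dW + Gu dU
     dY  = H a dt + K dW
     dY~ = Ht a dt + Kt dW + Kbar dU      (augmented, unused output)     *)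
Record plant (n nw nu ny nyt : nat) := Plant {
  pF : 'M[C]_n; pGw : 'M[C]_(n, nw); pGu : 'M[C]_(n, nu);
  pH : 'M[C]_(ny, n); pK : 'M[C]_(ny, nw);
  pHt : 'M[C]_(nyt, n); pKt : 'M[C]_(nyt, nw); pKbar : 'M[C]_(nyt, nu) }.

Definition plant_pr n nw nu ny nyt (P : plant n nw nu ny nyt) : Prop :=
  phys_realizable (pF P) (row_mx (pGw P) (pGu P)) (col_mx (pH P) (pHt P))
    (block_mx (pK P) 0 (pKt P) (pKbar P)).

(* Coherent controller with nc modes, noise input W~ (dim nu), input Y:
     da_c = Fc a_c dt + Gcw dW~ + Gcy dY
     dU   = Hc a_c dt + Kcw dW~ + Kcy dY                                  *)
Record controller (nu ny : nat) := Controller {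
  nc : nat; cF : 'M[C]_nc; cGw : 'M[C]_(nc, nu); cGy : 'M[C]_(nc, ny);
  cH : 'M[C]_(nu, nc); cKw : 'M[C]_nu; cKy : 'M[C]_(nu, ny) }.

(* physical realizability: some augmentation by an extra output dU~ makes the
   system (W~,Y) -> (U,U~) physically realizable *)
Definition controller_pr nu ny (c : controller nu ny) : Prop :=
  exists (nut : nat) (Ht : 'M[C]_(nut, nc c)) (Ktw : 'M[C]_(nut, nu))
         (Kty : 'M[C]_(nut, ny)),
    phys_realizable (cF c) (row_mx (cGw c) (cGy c)) (col_mx (cH c) Ht)
      (block_mx (cKw c) (cKy c) Ktw Kty).

(* the trivial controller dU = dW~ (no modes) *)
Definition trivial_controller nu ny : controller nu ny :=
  @Controller nu ny 0 0 0 0 0 1%:M 0.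

(* Closed loop, state (a, a_c), inputs (W, W~), output
   dZ = L [dY; dY~].  Substituting dY = H a dt + K dW and dU:
     dU = Kcy H a dt + Hc a_c dt + Kcy K dW + Kcw dW~                    *)
Section ClosedLoop.
Variables (n nw nu ny nyt nz : nat) (P : plant n nw nu ny nyt)
  (L : 'M[C]_(nz, ny + nyt)) (c : controller nu ny).
Local Notation F := (pF P). Local Notation Gw := (pGw P).
Local Notation Gu := (pGu P). Local Notation H := (pH P).
Local Notation K := (pK P). Local Notation Ht := (pHt P).
Local Notation Kt := (pKt P). Local Notation Kbar := (pKbar P).

Definition cl_A : 'M[C]_(n + nc c) :=
  block_mx (F + Gu *m cKy c *m H) (Gu *m cH c) (cGy c *m H) (cF c).
Definition cl_B : 'M[C]_(n + nc c, nw + nu) :=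
  block_mx (Gw + Gu *m cKy c *m K) (Gu *m cKw c) (cGy c *m K) (cGw c).
Definition cl_C : 'M[C]_(nz, n + nc c) :=
  L *m block_mx H 0 (Ht + Kbar *m cKy c *m H) (Kbar *m cH c).
Definition cl_D : 'M[C]_(nz, nw + nu) :=
  L *m block_mx K 0 (Kt + Kbar *m cKy c *m K) (Kbar *m cKw c).

Definition cl_internally_stable : Prop := hurwitz cl_A.
Definition cl_hinf : \bar R := hinf_norm cl_A cl_B cl_C cl_D.
End ClosedLoop.

Definition unit_columns (p q : nat) (L : 'M[C]_(p, q)) : Prop :=
  forall j : 'I_q, exists i : 'I_p, col j L = delta_mx i 0.
End Defs.

From HB Require Import structures.
From mathcomp Require Import all_boot all_order all_algebra.
From mathcomp Require Import complex.
From mathcomp Require Import boolp classical_sets reals constructive_ereal ereal.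
From mathcomp Require Import lra.
Import Order.TTheory GRing.Theory Num.Theory.
Set Implicit Arguments. Unset Strict Implicit. Unset Printing Implicit Defensive.
Local Open Scope ring_scope. Local Open Scope complex_scope.

(* With the trivial controller the closed loop is the plant followed by the
   isometry L, and physical realizability (the Lyapunov equation together with
   G = -Theta H^dag) makes the plant transfer function all-pass on the imaginary
   axis, so every gain of the trivial loop equals 1.  Every realizable
   controller has feedthrough dU = dW~, so every closed loop has an isometric
   feedthrough; since a stable transfer function tends to its feedthrough at
   high frequency, its H-infinity norm is at least 1.  Finally, a non-stable
   left eigenvector of F annihilates the input matrix (again by the Lyapunov
   equation), so it stays a non-stable mode of every closed loop: stability of
   any closed loop forces stability of the trivial one. *)

Section Adjoint.
Variable R : realType.
Local Notation C := (R[i]).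
Implicit Types (m n p : nat).

Lemma adjmxM m n p (A : 'M[C]_(m, n)) (B : 'M[C]_(n, p)) :
  adj (A *m B) = adj B *m adj A.
Proof. by rewrite /adj map_mxM trmx_mul. Qed.

Lemma adjmxD m n (A B : 'M[C]_(m, n)) : adj (A + B) = adj A + adj B.
Proof. by rewrite /adj map_mxD linearD. Qed.

Lemma adjmxN m n (A : 'M[C]_(m, n)) : adj (- A) = - adj A.
Proof. by rewrite /adj map_mxN linearN. Qed.

Lemma adjmxZ m n (a : C) (A : 'M[C]_(m, n)) : adj (a *: A) = (a^*)%C *: adj A.
Proof. by apply/matrixP => i j; rewrite /adj !mxE rmorphM. Qed.

Lemma adjmx0 m n : adj (0 : 'M[C]_(m, n)) = 0.
Proof. by apply/matrixP => i j; rewrite /adj !mxE conjc0. Qed.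

Lemma adjmxK m n (A : 'M[C]_(m, n)) : adj (adj A) = A.
Proof. by apply/matrixP => i j; rewrite /adj !mxE conjcK. Qed.

Lemma adjmx_scalar n (a : C) : adj (a%:M : 'M_n) = (a^*)%C%:M.
Proof.
apply/matrixP => i j; rewrite /adj !mxE eq_sym.
by case: (i == j); rewrite ?mulr1n ?mulr0n ?conjc0.
Qed.

Lemma adjmx1 n : adj (1%:M : 'M[C]_n) = 1%:M.
Proof. by rewrite adjmx_scalar conjc1. Qed.

Lemma adjmx_row m n1 n2 (A : 'M[C]_(m, n1)) (B : 'M[C]_(m, n2)) :
  adj (row_mx A B) = col_mx (adj A) (adj B).
Proof. by rewrite /adj map_row_mx tr_row_mx. Qed.

Lemma adjmx_col m1 m2 n (A : 'M[C]_(m1, n)) (B : 'M[C]_(m2, n)) :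
  adj (col_mx A B) = row_mx (adj A) (adj B).
Proof. by rewrite /adj map_col_mx tr_col_mx. Qed.

Lemma adjmx_block m1 m2 n1 n2 (A : 'M[C]_(m1, n1)) (B : 'M[C]_(m1, n2))
    (A' : 'M[C]_(m2, n1)) (B' : 'M[C]_(m2, n2)) :
  adj (block_mx A B A' B') = block_mx (adj A) (adj A') (adj B) (adj B').
Proof. by rewrite /adj map_block_mx tr_block_mx. Qed.

Lemma isometry_mulmx m n p (A : 'M[C]_(m, n)) (B : 'M[C]_(n, p)) :
  adj A *m A = 1%:M -> adj B *m B = 1%:M -> adj (A *m B) *m (A *m B) = 1%:M.
Proof. by move=> hA hB; rewrite adjmxM -mulmxA (mulmxA (adj A)) hA mul1mx. Qed.

End Adjoint.

Section VectorNorm.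
Variable R : realType.
Local Notation C := (R[i]).
Local Notation normc := Normc.normc.
Implicit Types (k m : nat).

Lemma mulcJ_sqr (z : C) : (z^* * z)%C = (complex.Re z ^+ 2 + complex.Im z ^+ 2)%:C.
Proof.
case: z => a b; apply/eqP; rewrite eq_complex /= !expr2.
by apply/andP; split; apply/eqP; rewrite ?mulNr ?opprK // [a * b]mulrC addrN.
Qed.

Lemma vnorm_ge0 k (v : 'cV[C]_k) : 0 <= vnorm v.
Proof. exact: sqrtr_ge0. Qed.

Lemma sqr_vnorm k (v : 'cV[C]_k) :
  vnorm v ^+ 2 = \sum_i (complex.Re (v i 0) ^+ 2 + complex.Im (v i 0) ^+ 2).
Proof. by rewrite sqr_sqrtr // sumr_ge0 // => i _; rewrite addr_ge0 ?sqr_ge0. Qed.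

Lemma sqr_vnorm_normc k (v : 'cV[C]_k) :
  vnorm v ^+ 2 = \sum_i normc (v i 0) ^+ 2.
Proof.
rewrite sqr_vnorm; apply: eq_bigr => i _; case: (v i 0) => a b /=.
by rewrite sqr_sqrtr // addr_ge0 ?sqr_ge0.
Qed.

Lemma adj_mulmx_self k (v : 'cV[C]_k) : (adj v *m v) 0 0 = (vnorm v ^+ 2)%:C.
Proof.
rewrite sqr_vnorm mxE rmorph_sum; apply: eq_bigr => i _.
by rewrite /adj !mxE mulcJ_sqr.
Qed.

Lemma vnorm_eq0 k (v : 'cV[C]_k) : vnorm v = 0 -> v = 0.
Proof.
move=> v0; have : vnorm v ^+ 2 = 0 by rewrite v0 expr0n.
rewrite sqr_vnorm => /psumr_eq0P vi0; apply/matrixP => i j; rewrite ord1 mxE.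
have /eqP := vi0 (fun i _ => addr_ge0 (sqr_ge0 _) (sqr_ge0 _)) i isT.
rewrite paddr_eq0 ?sqr_ge0 // !sqrf_eq0.
by case: (v i 0) => a b /andP[/= /eqP-> /eqP->].
Qed.

Lemma vnorm_isometry k m (M : 'M[C]_(m, k)) (v : 'cV[C]_k) :
  adj M *m M = 1%:M -> vnorm (M *m v) = vnorm v.
Proof.
move=> hM; have : (vnorm (M *m v) ^+ 2)%:C = (vnorm v ^+ 2)%:C.
  by rewrite -!adj_mulmx_self adjmxM -mulmxA (mulmxA (adj M)) hM mul1mx.
by move/complexI/eqP; rewrite eqrXn2 ?vnorm_ge0 // => /eqP.
Qed.

End VectorNorm.

Section Lossless.
Variables (R : realType) (k m : nat).
Local Notation C := (R[i]).
Variables (A T : 'M[C]_k) (B : 'M[C]_(k, m)) (Cm : 'M[C]_(m, k)) (s : C).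
Hypotheses (T_herm : adj T = T) (lyapA : A *m T + T *m adj A + B *m adj B = 0)
  (B_def : B = - (T *m adj Cm)) (s_imag : s + (s^*)%C = 0) (s_unit : s%:M - A \in unitmx).

Let Phi := invmx (s%:M - A).

Lemma lyapunov_resolvent : Phi *m (B *m adj B) *m adj Phi = Phi *m T + T *m adj Phi.
Proof.
have sJ : (s^*)%C = - s by apply/eqP; rewrite -addr_eq0 addrC s_imag.
have -> : B *m adj B = (s%:M - A) *m T + T *m adj (s%:M - A).
  have -> : B *m adj B = - (A *m T + T *m adj A).
    by apply/eqP; rewrite -addr_eq0 addrC lyapA.
  rewrite adjmxD adjmxN adjmx_scalar sJ mulmxBl mulmxDr mulmxN scalar_mxC.
  by rewrite !mul_scalar_mx scaleNr addrACA addrN add0r opprD.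
have PhiK : Phi *m (s%:M - A) = 1%:M by rewrite mulVmx.
rewrite mulmxDr mulmxDl !mulmxA PhiK mul1mx -!mulmxA -adjmxM PhiK.
by rewrite adjmx1 mulmx1 addrC.
Qed.

Lemma tf_lossless_sq : adj (tf A B Cm 1%:M s) *m tf A B Cm 1%:M s = 1%:M.
Proof.
have adjB : adj B = - (Cm *m T) by rewrite B_def adjmxN adjmxM adjmxK T_herm.
apply: mulmx1C.
rewrite /tf -/Phi adjmxD adjmx1 !adjmxM mulmxDl !mulmxDr !mul1mx mulmx1.
have -> : Cm *m Phi *m B *m (adj B *m (adj Phi *m adj Cm)) =
    Cm *m (Phi *m (B *m adj B) *m adj Phi) *m adj Cm by rewrite !mulmxA.
rewrite lyapunov_resolvent adjB {1}B_def.
rewrite mulmxDr mulmxDl mulmxN mulNmx !mulmxA addrA.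
by rewrite [X in X - _ - _ + _]addrC addrK addrN add0r.
Qed.

End Lossless.

Lemma tf_lossless (R : realType) k m p (A : 'M[R[i]]_k) (B : 'M[R[i]]_(k, m))
    (Cm : 'M[R[i]]_(p, k)) (D : 'M[R[i]]_(p, m)) (w : R) :
  phys_realizable A B Cm D -> (Complex 0 w)%:M - A \in unitmx ->
  adj (tf A B Cm D (Complex 0 w)) *m tf A B Cm D (Complex 0 w) = 1%:M.
Proof.
case=> e; move: B D; case: m / e => B D; rewrite !castmx_id.
move=> [T [[T_herm _] lyapA B_def ->]] iw_unit.
apply: (tf_lossless_sq T_herm lyapA B_def) iw_unit.
by apply/eqP; rewrite eq_complex /= addr0 subrr !eqxx.
Qed.

Section Stability.
Variables (R : realType) (k : nat).
Local Notation C := (R[i]).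

Lemma hurwitz_unitmx (A : 'M[C]_k) (s : C) :
  hurwitz A -> 0 <= complex.Re s -> s%:M - A \in unitmx.
Proof.
move=> stableA Re_s; apply: contraT => sA_singular.
have : eigenvalue A s.
  rewrite /eigenvalue /eigenspace kermx_eq0 row_free_unit.
  by rewrite -opprB -scaleN1r unitmxE detZ unitrMr ?unitrX ?unitrN1 // -unitmxE.
by move/stableA/lt_le_trans/(_ Re_s); rewrite ltxx.
Qed.

Lemma lyapunov_nonstable_left_eigvec m (F T : 'M[C]_k) (G : 'M[C]_(k, m))
    (v : 'rV[C]_k) (l : C) :
  posdef T -> F *m T + T *m adj F + G *m adj G = 0 ->
  v *m F = l *: v -> v != 0 -> 0 <= complex.Re l -> v *m G = 0.
Proof.
move=> [T_herm T_pos] lyapF vF v_neq0 Re_l.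
have vTv_gt0 : 0 < (v *m T *m adj v) 0 0.
  have := T_pos (adj v); rewrite adjmxK; apply.
  by apply: contra v_neq0 => /eqP v0; rewrite -(adjmxK v) v0 adjmx0.
set Q := v *m T *m adj v in vTv_gt0.
have : v *m (F *m T + T *m adj F + G *m adj G) *m adj v = 0.
  by rewrite lyapF mulmx0 mul0mx.
rewrite !mulmxDr !mulmxDl.
have -> : v *m (F *m T) *m adj v = l *: Q by rewrite mulmxA vF -!scalemxAl.
have -> : v *m (T *m adj F) *m adj v = (l^*)%C *: Q.
  by rewrite (mulmxA v T) -mulmxA -adjmxM vF adjmxZ -scalemxAr.
have -> : v *m (G *m adj G) *m adj v = adj (adj (v *m G)) *m adj (v *m G).
  by rewrite adjmxK mulmxA -mulmxA -adjmxM.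
have := adj_mulmx_self (adj (v *m G)); rewrite mxE => vG_sqr.
move/(congr1 (fun M : 'M[C]_1 => M 0 0)); rewrite !mxE vG_sqr.
rewrite -mulrDl addcJ => /eqP; rewrite paddr_eq0; first last.
- by rewrite ler0c sqr_ge0.
- rewrite /Q mxE in vTv_gt0; apply: mulr_ge0 (ltW vTv_gt0).
  by rewrite mulr_ge0 ?ler0c ?ler0n.
case/andP=> _ /eqP/complexI/eqP; rewrite sqrf_eq0 => /eqP/vnorm_eq0 vG0.
by rewrite -(adjmxK (v *m G)) vG0 adjmx0.
Qed.

End Stability.

Lemma le_ereal_sup_approx (R : realType) (S : set (\bar R)) (x : R) :
  (forall r, r < x -> exists2 y, S y & (r%:E <= y)%E) -> (x%:E <= ereal_sup S)%E.
Proof.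
move=> approxS; apply/lee_subgt0Pr => e e_gt0.
have [y Sy le_y] := approxS (x - e) ltac:(lra).
by rewrite -EFinB; apply: le_ereal_sup_tmp; exists y.
Qed.

Section HighFrequency.
Variable R : realType.
Local Notation C := (R[i]).
Local Notation normc := Normc.normc.
Implicit Types (k m p : nat).

Definition vnorm1 k (x : 'cV[C]_k) : R := \sum_i normc (x i 0).
Definition mxnorm1 p q (M : 'M[C]_(p, q)) : R := \sum_i \sum_j normc (M i j).

Lemma normc_ge0 (z : C) : 0 <= normc z.
Proof. by case: z => a b; exact: sqrtr_ge0. Qed.

Lemma normc_sum (I : finType) (F : I -> C) : normc (\sum_i F i) <= \sum_i normc (F i).
Proof.
apply: (big_ind2 (fun a b => normc a <= b)) => //; first by rewrite Normc.normc0.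
by move=> x1 x2 y1 y2 le1 le2; apply: le_trans (le_normcD _ _) (lerD le1 le2).
Qed.

Lemma normc_imag (w : R) : 0 <= w -> normc (Complex 0 w) = w.
Proof. by move=> w_ge0; rewrite /= expr0n /= add0r sqrtr_sqr ger0_norm. Qed.

Lemma vnorm1_ge0 k (x : 'cV[C]_k) : 0 <= vnorm1 x.
Proof. by apply: sumr_ge0 => i _; exact: normc_ge0. Qed.

Lemma mxnorm1_ge0 p q (M : 'M[C]_(p, q)) : 0 <= mxnorm1 M.
Proof. by apply: sumr_ge0 => i _; apply: sumr_ge0 => j _; exact: normc_ge0. Qed.

Lemma vnorm1D k (x y : 'cV[C]_k) : vnorm1 (x + y) <= vnorm1 x + vnorm1 y.
Proof.
by rewrite /vnorm1 -big_split /=; apply: ler_sum => i _; rewrite mxE le_normcD.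
Qed.

Lemma vnorm1_mulmx p q (M : 'M[C]_(p, q)) (x : 'cV[C]_q) :
  vnorm1 (M *m x) <= mxnorm1 M * vnorm1 x.
Proof.
rewrite /vnorm1 /mxnorm1 mulr_suml; apply: ler_sum => i _.
rewrite mxE mulr_suml; apply: le_trans (normc_sum _) _; apply: ler_sum => j _.
rewrite Normc.normcM ler_wpM2l ?normc_ge0 //.
by rewrite (bigD1 j) //= lerDl sumr_ge0 // => l _; exact: normc_ge0.
Qed.

Lemma vnorm1_resolvent k (A : 'M[C]_k) (b : 'cV[C]_k) (w : R) :
  0 <= w -> (Complex 0 w)%:M - A \in unitmx ->
  w * vnorm1 (invmx ((Complex 0 w)%:M - A) *m b) <=
  mxnorm1 A * vnorm1 (invmx ((Complex 0 w)%:M - A) *m b) + vnorm1 b.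
Proof.
move=> w_ge0 iwA_unit; set x := invmx _ *m b.
have iwx : Complex 0 w *: x = A *m x + b.
  have <- : ((Complex 0 w)%:M - A) *m x = b by rewrite mulmxA mulmxV // mul1mx.
  by rewrite mulmxBl mul_scalar_mx addrC subrK.
have -> : w * vnorm1 x = vnorm1 (Complex 0 w *: x).
  rewrite /vnorm1 mulr_sumr; apply: eq_bigr => i _.
  by rewrite [in RHS]mxE Normc.normcM normc_imag.
by rewrite iwx; apply: le_trans (vnorm1D _ _) (lerD (vnorm1_mulmx _ _) _).
Qed.

Lemma tf_near_feedthrough k m p (A : 'M[C]_k) (B : 'M[C]_(k, m))
    (Cm : 'M[C]_(p, k)) (D : 'M[C]_(p, m)) (v : 'cV[C]_m) (eps : R) :
  hurwitz A -> 0 < eps ->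
  exists w, vnorm1 (tf A B Cm D (Complex 0 w) *m v - D *m v) <= eps.
Proof.
move=> stableA eps_gt0.
set al := mxnorm1 A; set be := vnorm1 (B *m v); set ga := mxnorm1 Cm.
have al_ge0 : 0 <= al := mxnorm1_ge0 A.
have be_ge0 : 0 <= be := vnorm1_ge0 (B *m v).
have ga_ge0 : 0 <= ga := mxnorm1_ge0 Cm.
(* At frequency [w = al + 1 + q] the resolvent bound gives
   [(1 + q) * vnorm1 x <= be], hence [ga * vnorm1 x <= eps]. *)
set q := ga * be / eps.
have q_ge0 : 0 <= q by rewrite divr_ge0 ?mulr_ge0 // ltW.
have q_eps : q * eps = ga * be by rewrite /q divfK // gt_eqF.
pose w := al + 1 + q; exists w.
have w_ge0 : 0 <= w by rewrite /w; lra.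
have iwA_unit : (Complex 0 w)%:M - A \in unitmx by exact: hurwitz_unitmx.
have := vnorm1_resolvent (B *m v) w_ge0 iwA_unit.
set x := invmx _ *m _ => resolvent_x.
have -> : tf A B Cm D (Complex 0 w) *m v - D *m v = Cm *m x.
  by rewrite /tf mulmxDl addrK !mulmxA.
apply: le_trans (vnorm1_mulmx Cm x) _; rewrite -/ga.
have x_ge0 := vnorm1_ge0 x.
have x_le : vnorm1 x + q * vnorm1 x <= be by rewrite -/al -/be /w in resolvent_x; lra.
have := ler_wpM2l ga_ge0 x_le; nra.
Qed.

Lemma sqr_vnorm_addr_ge k (d y : 'cV[C]_k) :
  vnorm d = 1 -> 1 - 2 * vnorm1 y <= vnorm (d + y) ^+ 2.
Proof.
move=> d_unit.
have d_le1 i : normc (d i 0) <= 1.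
  have : normc (d i 0) ^+ 2 <= 1.
    rewrite -(expr1n _ 2) -d_unit sqr_vnorm_normc (bigD1 i) //= lerDl.
    by rewrite sumr_ge0 // => j _; exact: sqr_ge0.
  have := normc_ge0 (d i 0); nra.
rewrite -(expr1n _ 2) -{1}d_unit !sqr_vnorm_normc /vnorm1 mulr_sumr -sumrB.
apply: ler_sum => i _; rewrite mxE.
have tri : normc (d i 0) <= normc (d i 0 + y i 0) + normc (y i 0).
  by rewrite -(normcN (y i 0)); apply: le_trans (le_normcD _ _); rewrite addrK.
move: tri (d_le1 i) (normc_ge0 (d i 0)) (normc_ge0 (y i 0)) (normc_ge0 (d i 0 + y i 0)).
set a := normc (d i 0); set b := normc (y i 0); set c := normc (_ + _).
by move=> *; have [|] := lerP b a; nra.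
Qed.

Lemma hinf_norm_ge1 k m p (A : 'M[C]_k) (B : 'M[C]_(k, m)) (Cm : 'M[C]_(p, k))
    (D : 'M[C]_(p, m)) (v : 'cV[C]_m) :
  hurwitz A -> adj D *m D = 1%:M -> vnorm v = 1 -> (1%:E <= hinf_norm A B Cm D)%E.
Proof.
move=> stableA D_iso v_unit; apply: le_ereal_sup_approx => r r_lt1.
have [r_le0|r_gt0] := lerP r 0.
  exists (vnorm (tf A B Cm D (Complex 0 0) *m v))%:E; first by exists 0, v.
  by rewrite lee_fin (le_trans r_le0 (vnorm_ge0 _)).
have eps_gt0 : 0 < (1 - r ^+ 2) / 2 by nra.
have [w near] := tf_near_feedthrough B Cm D v stableA eps_gt0.
exists (vnorm (tf A B Cm D (Complex 0 w) *m v))%:E; first by exists w, v.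
rewrite lee_fin.
have Dv_unit : vnorm (D *m v) = 1 by rewrite vnorm_isometry.
have := sqr_vnorm_addr_ge (tf A B Cm D (Complex 0 w) *m v - D *m v) Dv_unit.
rewrite [D *m v + _]addrC subrK; have := vnorm_ge0 (tf A B Cm D (Complex 0 w) *m v); nra.
Qed.

End HighFrequency.

Section Realizability.
Variable R : realType.
Local Notation C := (R[i]).
Implicit Types (k m p : nat).

Lemma phys_realizable_feedthrough_isometry k m p (A : 'M[C]_k) (B : 'M[C]_(k, m))
    (Cm : 'M[C]_(p, k)) (D : 'M[C]_(p, m)) :
  phys_realizable A B Cm D -> adj D *m D = 1%:M.
Proof.
case=> e; move: B D; case: m / e => B D; rewrite !castmx_id => -[T [_ _ _ ->]].
by rewrite adjmx1 mul1mx.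
Qed.

Lemma phys_realizable_pad0 k m p (A : 'M[C]_k) (B : 'M[C]_(k, m))
    (Cm : 'M[C]_(p, k)) (D : 'M[C]_(p, m)) :
  phys_realizable A B Cm D ->
  phys_realizable (block_mx A 0 0 (0 : 'M[C]_0)) (col_mx B (0 : 'M[C]_(0, m)))
    (row_mx Cm (0 : 'M[C]_(p, 0))) D.
Proof.
case=> e; move: B D; case: m / e => B D; rewrite !castmx_id.
move=> [T [[T_herm T_pos] lyapA B_def D1]]; exists erefl; rewrite !castmx_id.
exists (block_mx T 0 0 (0 : 'M[C]_0)); split => //.
- split; first by rewrite adjmx_block !adjmx0 T_herm.
  move=> v v_neq0; rewrite -(vsubmxK v) adjmx_col mul_row_block !mulmx0 !addr0.
  rewrite mul_row_col mul0mx addr0; apply: T_pos.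
  apply: contra v_neq0 => /eqP uv0.
  by rewrite -(vsubmxK v) uv0 (flatmx0 (dsubmx v)) col_mx0.
- rewrite !adjmx_block !adjmx0 adjmx_col adjmx0 !mulmx_block mul_col_row.
  by rewrite !mulmx0 !mul0mx !addr0 !add_block_mx !addr0 lyapA block_mx0.
- rewrite adjmx_row adjmx0 mul_block_col !mulmx0 !mul0mx !addr0 opp_col_mx -B_def.
  by rewrite (flatmx0 (- 0)).
Qed.

Lemma controller_pr_trivial nu ny : controller_pr (trivial_controller R nu ny).
Proof.
exists ny, 0, 0, 1%:M; exists erefl; rewrite !castmx_id; exists 0; split.
- by split; [exact: adjmx0 | move=> v; rewrite (flatmx0 v) eqxx].
- exact: flatmx0.
- by rewrite [LHS]flatmx0 [RHS]flatmx0.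
- by rewrite /= -scalar_mx_block.
Qed.

Lemma controller_pr_feedthrough nu ny (c : controller R nu ny) :
  controller_pr c -> cKw c = 1%:M /\ cKy c = 0.
Proof.
case=> nut [Ht [Ktw [Kty [e [T [_ _ _ K1]]]]]].
have enut : nut = ny by apply: (@addnI nu).
subst nut; rewrite castmx_id [RHS]scalar_mx_block in K1.
by case/eq_block_mx: K1 => -> -> _ _.
Qed.

End Realizability.

Section TrivialLoop.
Variables (R : realType) (n nw nu ny nyt nz : nat).
Local Notation C := (R[i]).
Variables (P : plant R n nw nu ny nyt) (L : 'M[C]_(nz, ny + nyt)).
Hypothesis P_pr : plant_pr P.
Local Notation tr := (trivial_controller R nu ny).

Lemma cl_A_trivial : cl_A P tr = block_mx (pF P) 0 0 (0 : 'M[C]_0).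
Proof. by rewrite /cl_A /= !mulmx0 !mul0mx addr0. Qed.

Lemma cl_B_trivial :
  cl_B P tr = col_mx (row_mx (pGw P) (pGu P)) (0 : 'M[C]_(0, nw + nu)).
Proof. by rewrite /cl_B /= !mulmx0 !mul0mx addr0 mulmx1 block_mxEv row_mx0. Qed.

Lemma cl_C_trivial :
  cl_C P L tr = L *m row_mx (col_mx (pH P) (pHt P)) (0 : 'M[C]_(ny + nyt, 0)).
Proof. by rewrite /cl_C /= !mulmx0 !mul0mx addr0 block_mxEh col_mx0. Qed.

Lemma cl_D_trivial : cl_D P L tr = L *m block_mx (pK P) 0 (pKt P) (pKbar P).
Proof. by rewrite /cl_D /= !mulmx0 !mul0mx addr0 mulmx1. Qed.

Lemma cl_stable_trivial (c : controller R nu ny) :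
  cl_internally_stable P c -> cl_internally_stable P tr.
Proof.
move=> c_stable; rewrite /cl_internally_stable cl_A_trivial => l /eigenvalueP [v vA v_neq0].
rewrite ltNge; apply/negP => Re_l.
move: vA v_neq0; rewrite -(hsubmxK v) (thinmx0 (rsubmx v)); set v1 := lsubmx v.
rewrite mul_row_block !mulmx0 addr0 scale_row_mx => /eq_row_mx[v1F _] v_neq0.
have v1_neq0 : v1 != 0 by apply: contra v_neq0 => /eqP->; rewrite row_mx0.
case: P_pr => _ [T [T_pos lyapF _ _]].
have := lyapunov_nonstable_left_eigvec T_pos lyapF v1F v1_neq0 Re_l.
rewrite mul_mx_row => /eqP; rewrite row_mx_eq0 => /andP[_ /eqP v1Gu].
have : eigenvalue (cl_A P c) l.
  apply/eigenvalueP; exists (row_mx v1 0).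
    rewrite /cl_A mul_row_block !mul0mx !addr0 scale_row_mx scaler0.
    by rewrite mulmxDr !mulmxA v1Gu !mul0mx addr0 v1F.
  by apply: contra v1_neq0; rewrite row_mx_eq0 => /andP[].
by move/c_stable/lt_le_trans/(_ Re_l); rewrite ltxx.
Qed.

Lemma cl_tf_trivial_isometry (w : R) :
  adj L *m L = 1%:M -> hurwitz (cl_A P tr) ->
  let T := tf (cl_A P tr) (cl_B P tr) (cl_C P L tr) (cl_D P L tr) (Complex 0 w) in
  adj T *m T = 1%:M.
Proof.
move=> L_iso stable_tr /=.
have -> : tf (cl_A P tr) (cl_B P tr) (cl_C P L tr) (cl_D P L tr) (Complex 0 w) =
    L *m tf (block_mx (pF P) 0 0 (0 : 'M[C]_0))
      (col_mx (row_mx (pGw P) (pGu P)) (0 : 'M[C]_(0, nw + nu)))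
      (row_mx (col_mx (pH P) (pHt P)) (0 : 'M[C]_(ny + nyt, 0)))
      (block_mx (pK P) 0 (pKt P) (pKbar P)) (Complex 0 w).
  by rewrite cl_A_trivial cl_B_trivial cl_C_trivial cl_D_trivial /tf mulmxDr !mulmxA.
have iw_unit : (Complex 0 w)%:M - block_mx (pF P) 0 0 (0 : 'M[C]_0) \in unitmx.
  by rewrite -cl_A_trivial; exact: hurwitz_unitmx.
exact: isometry_mulmx L_iso (tf_lossless (phys_realizable_pad0 P_pr) iw_unit).
Qed.

Lemma cl_D_isometry (c : controller R nu ny) :
  adj L *m L = 1%:M -> controller_pr c -> adj (cl_D P L c) *m cl_D P L c = 1%:M.
Proof.
move=> L_iso /controller_pr_feedthrough [Kw1 Ky0].
rewrite /cl_D Kw1 Ky0 !mulmx0 !mul0mx addr0 mulmx1.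
exact: isometry_mulmx L_iso (phys_realizable_feedthrough_isometry P_pr).
Qed.

End TrivialLoop.

Theorem theorem6 (R : realType) (n nw nu ny nyt nz : nat)
  (P : plant R n nw nu ny nyt) (L : 'M[R[i]]_(nz, ny + nyt)) :
  plant_pr P ->
  unit_columns L -> adj L *m L = 1%:M ->
  controller_pr (trivial_controller R nu ny) /\
  (forall c : controller R nu ny,
     controller_pr c -> cl_internally_stable P c ->
     cl_internally_stable P (trivial_controller R nu ny) /\
     (cl_hinf P L (trivial_controller R nu ny) <= cl_hinf P L c)%E).
Proof.
move=> P_pr _ L_iso; split; first exact: controller_pr_trivial.
move=> c c_pr c_stable; have tr_stable := cl_stable_trivial P_pr c_stable.
split; first exact: tr_stable.
apply/ereal_supP => _ [w [v [v_unit ->]]].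
rewrite vnorm_isometry ?v_unit; last exact: cl_tf_trivial_isometry.
exact: hinf_norm_ge1 c_stable (cl_D_isometry P_pr L_iso c_pr) v_unit.
Qed.
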